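(* Let $\mathcal C$ be a hereditary class of graphs with infinite VC-dimension and let $H=(A\cup B,E)$ be a bipartite graph with bipartition $(A,B)$. Then $\mathcal C$ contains a graph $G$ whose vertex set admits a partition $(A',B')$ such that deleting from $G$ all edges with both ends in $A'$ and all edges with both ends in $B'$ yields a graph isomorphic to $H$ via an isomorphism mapping $A'$ onto $A$ and $B'$ onto $B$ (i.e. $H$ is a bipartisation of $G$).
   Context: A class of graphs is hereditary if it is closed under isomorphism and under taking induced subgraphs. For a graph $G$ and $v\in V(G)$, $N[v]$ is the closed neighbourhood. A set $X\subseteq V(G)$ is shattered if for every $S\subseteq X$ there is a vertex $v$ with $N[v]\cap X=S$; the VC-dimension of $G$ is the largest size of a shattered set; a class has infinite VC-dimension if these are unbounded over the class. A bipartite graph $H=(A\cup B,E)$ is a bipartisation of $G$ if for some partition $(A,B)$ of $V(G)$, removing all edges inside $A$ and inside $B$ from $G$ yields $H$. *)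

From mathcomp Require Import all_boot.
Set Implicit Arguments. Unset Strict Implicit. Unset Printing Implicit Defensive.

Definition is_graph (T : finType) (e : rel T) : Prop :=
  symmetric e /\ irreflexive e.

Definition graph_class := forall T : finType, rel T -> Prop.

Definition class_of_graphs (C : graph_class) : Prop :=
  forall (T : finType) (e : rel T), C T e -> is_graph e.

Definition iso_closed (C : graph_class) : Prop :=
  forall (T T' : finType) (e : rel T) (e' : rel T') (f : T' -> T),
    bijective f -> (forall x y, e' x y = e (f x) (f y)) -> C T e -> C T' e'.

Definition induced_closed (C : graph_class) : Prop :=
  forall (T : finType) (e : rel T) (X : {set T}),
    C T e -> C {x : T | x \in X} (fun x y => e (val x) (val y)).

Definition hereditary (C : graph_class) : Prop :=
  iso_closed C /\ induced_closed C.

Definition closed_nbhd (T : finType) (e : rel T) (v : T) : {set T} :=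
  [set u | (u == v) || e v u].

Definition shattered (T : finType) (e : rel T) (X : {set T}) : Prop :=
  forall S : {set T}, S \subset X -> exists v : T, closed_nbhd e v :&: X = S.

Definition infinite_VC_dim (C : graph_class) : Prop :=
  forall k : nat, exists (T : finType) (e : rel T) (X : {set T}),
    C T e /\ shattered e X /\ #|X| = k.

Definition bipartite_wrt (U : finType) (h : rel U) (A : {set U}) : Prop :=
  is_graph h /\ forall x y, h x y -> (x \in A) != (y \in A).

(* h with bipartition (A, ~:A) is a bipartisation of g via the partition
   (A', ~:A') of V(g): deleting edges inside A' and inside ~:A' from g gives
   a graph isomorphic to h via f, with f mapping A' onto A and ~:A' onto ~:A *)
Definition bipartisation_of (U : finType) (h : rel U) (A : {set U})
    (T : finType) (g : rel T) : Prop :=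
  exists (A' : {set T}) (f : T -> U),
    [/\ bijective f,
        (forall x, (f x \in A) = (x \in A')) &
        (forall x y, h (f x) (f y) = g x y && ((x \in A') != (y \in A')))].

(* Shatter a set X whose points are labelled by |U|+1 copies of U plus one
   marker per vertex of U.  For each u pick a vertex w_u whose closed
   neighbourhood meets X exactly in the copies of the H-neighbours of u and in
   the marker of u; the markers make u |-> w_u injective.  The |U| vertices w_u
   lie in at most |U| copies, so some copy j contains none of them; hence w_b
   is adjacent to the copy-j point of a exactly when a is an H-neighbour of b.
   Sending a in A to its copy-j point and b outside A to w_b therefore embeds
   U so that the edges of G between the two sides are exactly those of H. *)
From mathcomp Require Import all_boot.

Set Implicit Arguments. Unset Strict Implicit. Unset Printing Implicit Defensive.

Lemma hereditary_pullback (C : graph_class) (T U : finType) (e : rel T)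
    (F : U -> T) :
  hereditary C -> injective F -> C T e -> C U (fun x y => e (F x) (F y)).
Proof.
move=> [C_iso C_ind] F_inj CTe.
pose Y := F @: setT.
pose toY (a : U) : {x : T | x \in Y} := exist _ (F a) (imset_f F (in_setT a)).
have toY_bij : bijective toY.
  apply: inj_card_bij; first by move=> a b [] /F_inj.
  by rewrite card_sig -[#|[eta _]|]/#|Y| card_imset // cardsT.
exact: C_iso toY_bij _ (C_ind _ _ Y CTe).
Qed.

Lemma embed_in_set (I T : finType) (X : {set T}) :
  #|I| <= #|X| -> exists f : I -> T, injective f /\ forall i, f i \in X.
Proof.
move=> le_IX; exists (fun i => enum_val (widen_ord le_IX (enum_rank i))).
split=> [i k /enum_val_inj [] /val_inj /enum_rank_inj //|i]; exact: enum_valP.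
Qed.

(* [inl (j, a)] is the copy of [a] number [j]; [inr u] is the marker of [u]. *)
Definition shatter_index (U : finType) := (('I_#|U|.+1 * U) + U)%type.

Section ShatteredSetEmbedsBipartite.

Variables (U : finType) (h : rel U) (A : {set U}).
Hypothesis h_sym : symmetric h.
Hypothesis h_cross : forall x y, h x y -> (x \in A) != (y \in A).

Variables (T : finType) (e : rel T) (X : {set T}) (idx : shatter_index U -> T).
Hypothesis e_sym : symmetric e.
Hypothesis X_shattered : shattered e X.
Hypothesis idx_inj : injective idx.
Hypothesis idx_in_X : forall i, idx i \in X.

Definition wanted (u : U) (i : shatter_index U) : bool :=
  if i is inl (_, a) then h u a else i == inr u.

Definition trace (u : U) : {set T} := idx @: [set i | wanted u i].

Lemma mem_trace u i : (idx i \in trace u) = wanted u i.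
Proof. by rewrite mem_imset // inE. Qed.

Definition witness (u : U) : T :=
  odflt (idx (inr u)) [pick w | closed_nbhd e w :&: X == trace u].

Lemma witnessP u : closed_nbhd e (witness u) :&: X = trace u.
Proof.
rewrite /witness; case: pickP => [w /eqP // | no_w].
have trace_sub : trace u \subset X.
  by apply/subsetP => _ /imsetP[i _ ->]; exact: idx_in_X.
have [w Nw] := X_shattered trace_sub.
by move: (no_w w); rewrite Nw eqxx.
Qed.

Lemma witness_adj u i :
  (idx i == witness u) || e (witness u) (idx i) = wanted u i.
Proof. by rewrite -mem_trace -witnessP !inE idx_in_X andbT. Qed.

Lemma witness_inj : injective witness.
Proof.
move=> u v eq_w.
have : idx (inr u) \in trace v by rewrite -witnessP -eq_w witnessP mem_trace /=.
by rewrite mem_trace /= => /eqP [].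
Qed.

Lemma exists_free_copy :
  exists j : 'I_#|U|.+1, forall u a, witness u != idx (inl (j, a)).
Proof.
pose copy_of u := if [pick p | witness u == idx (inl p)] is Some p then p.1
                  else ord0.
have : ~~ (setT \subset copy_of @: setT).
  apply/negP => /subset_leq_card; rewrite cardsT card_ord.
  by apply/negP; rewrite -ltnNge ltnS (leq_trans (leq_imset_card _ _)) ?cardsT.
case/subsetPn=> j _ j_free; exists j => u a; apply/negP => /eqP w_in_j.
move/negP: j_free; apply; apply/imsetP; exists u => //; rewrite /copy_of.
case: pickP => [p /eqP | no_p]; last by move: (no_p (j, a)); rewrite w_in_j eqxx.
by rewrite w_in_j => /idx_inj [<-].
Qed.

Section FreeCopy.

Variable j : 'I_#|U|.+1.
Hypothesis j_free : forall u a, witness u != idx (inl (j, a)).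

Definition embed (a : U) : T := if a \in A then idx (inl (j, a)) else witness a.

Lemma embed_inj : injective embed.
Proof.
move=> a b; rewrite /embed.
case: ifP => _; case: ifP => _.
- by move/idx_inj => [].
- by move=> eq_ab; have := j_free b a; rewrite eq_ab eqxx.
- by move=> eq_ab; have := j_free a b; rewrite eq_ab eqxx.
- exact: witness_inj.
Qed.

Lemma embed_cross a b : a \in A -> b \notin A ->
  h a b = e (embed a) (embed b).
Proof.
move=> Aa nAb; rewrite /embed Aa (negbTE nAb) e_sym h_sym.
rewrite -[h b a]/(wanted b (inl (j, a))) -witness_adj.
by rewrite eq_sym (negbTE (j_free _ _)).
Qed.

Lemma embed_edges x y :
  h x y = e (embed x) (embed y) && ((x \in A) != (y \in A)).
Proof.
wlog Ax : x y / x \in A.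
  move=> W; have [Ax | nAx] := boolP (x \in A); first by rewrite W // Ax.
  have [Ay | nAy] := boolP (y \in A).
    by rewrite h_sym e_sym W // Ay (negbTE nAx).
  by rewrite andbF; apply/negbTE/negP => /h_cross; rewrite (negbTE nAx) (negbTE nAy).
have [Ay | nAy] := boolP (y \in A).
  by rewrite Ax andbF; apply/negbTE/negP => /h_cross; rewrite Ax Ay.
by rewrite Ax andbT embed_cross.
Qed.

End FreeCopy.

Lemma shattered_embeds_bipartite :
  exists F : U -> T,
    injective F /\ forall x y, h x y = e (F x) (F y) && ((x \in A) != (y \in A)).
Proof.
have [j j_free] := exists_free_copy.
by exists (embed j); split; [exact: embed_inj | exact: embed_edges].
Qed.

End ShatteredSetEmbedsBipartite.

Theorem mainTheorem5 (C : graph_class) :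
  class_of_graphs C -> hereditary C -> infinite_VC_dim C ->
  forall (U : finType) (h : rel U) (A : {set U}),
    bipartite_wrt h A ->
    exists (T : finType) (g : rel T), C T g /\ bipartisation_of h A g.
Proof.
move=> C_graphs C_her C_VC U h A [[h_sym _] h_cross].
have [T [e [X [CTe [X_shattered cardX]]]]] := C_VC #|{: shatter_index U}|.
have [e_sym _] := C_graphs _ _ CTe.
have [idx [idx_inj idx_in_X]] :=
  @embed_in_set (shatter_index U) T X (eq_leq (esym cardX)).
have [F [F_inj F_edges]] :=
  shattered_embeds_bipartite h_sym h_cross e_sym X_shattered idx_inj idx_in_X.
exists U, (fun x y => e (F x) (F y)); split.
  exact: hereditary_pullback C_her F_inj CTe.
by exists A, id; split=> //; exists id.
Qed.
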